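(* Let $n,k,r$ be positive integers with $r\le k$, let $\mathcal{F}=\mathcal{F}(n,k,r)$, and let $\gamma>10r/k$. If $T\subseteq V(\mathcal{F})$ with $|T|>\gamma\, v(\mathcal{F})=\gamma k^n$, then $$e(\mathcal{F}[T])\ge\Big(\gamma-\frac{r}{k}\Big)^r e(\mathcal{F}).$$
   Context: $\mathcal{F}(n,k,r)$ is the $r$-uniform hypergraph with vertex set $[k]^n$ whose edges are the $r$-element subsets of $[k]^n$ lying on a common axis-parallel line, i.e., $r$ points that agree in all but one coordinate. Thus $e(\mathcal{F})=n\binom{k}{r}k^{n-1}$. $\mathcal{F}[T]$ denotes the subhypergraph induced by $T$. *)

From HB Require Import structures.
From mathcomp Require Import all_boot all_order all_algebra.
Set Implicit Arguments. Unset Strict Implicit. Unset Printing Implicit Defensive.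
Import Order.TTheory GRing.Theory Num.Theory.

Definition vtx (n k : nat) := {ffun 'I_n -> 'I_k}.

Definition on_line (n k : nat) (i : 'I_n) (S : {set vtx n k}) : bool :=
  [forall x in S, forall y in S, forall j : 'I_n, (j != i) ==> (x j == y j)].

(* Edges of F(n,k,r)[T]: an edge is an r-subset S of T together with the
   direction i of the axis-parallel line containing it.  For r >= 2 the
   direction is determined by S; for r = 1 this counts each vertex once per
   direction, matching e(F) = n * C(k,r) * k^(n-1). *)
Definition Fedges (n k r : nat) (T : {set vtx n k}) : {set 'I_n * {set vtx n k}} :=
  [set p : 'I_n * {set vtx n k} |
     [&& #|p.2| == r, p.2 \subset T & on_line p.1 p.2]].

Definition eF (n k r : nat) (T : {set vtx n k}) : nat := #|Fedges r T|.

(** Fix a direction i.  The lines in direction i partition [k]^n into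
    k^(n-1) lines of k points each, and the edges of F[T] in direction i are
    the r-subsets of the traces t_l = |T ∩ l| of T on these lines, so they
    number Σ_l C(t_l, r).  Writing a = γ - r/k, the estimate
    C(t, r) >= C(k, r) (t - r)^r / k^r together with the tangent-line bound
    for x ↦ x^r at a gives C(t, r) >= C(k, r) (a^r + r a^(r-1) (t/k - γ));
    the linear terms have nonnegative sum because Σ_l t_l = |T| > γ k^n.
    Summing over directions yields the theorem (only γ > r/k is needed). *)

From HB Require Import structures.
From mathcomp Require Import all_boot all_order all_algebra.
From mathcomp Require Import ring lra.
Set Implicit Arguments. Unset Strict Implicit. Unset Printing Implicit Defensive.
Import Order.TTheory GRing.Theory Num.Theory.

Section AxisLines.
Variables (n k : nat) (i : 'I_n) (z : 'I_k).

(** Lines in direction [i] are indexed by their point on the hyperplane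
    [x i = z]. *)
Definition line_base (x : vtx n k) : vtx n k :=
  [ffun j => if j == i then z else x j].

Definition base_plane : {set vtx n k} := [set y : vtx n k | y i == z].

Definition line_trace (T : {set vtx n k}) (y : vtx n k) : {set vtx n k} :=
  [set x in T | line_base x == y].

Definition dir_edges (r : nat) (T : {set vtx n k}) : {set {set vtx n k}} :=
  [set S : {set vtx n k} | [&& #|S| == r, S \subset T & on_line i S]].

Lemma eq_line_baseP (x x' : vtx n k) :
  reflect (forall j, j != i -> x j = x' j) (line_base x == line_base x').
Proof.
apply: (iffP eqP) => [Exx' j ji | Exx'].
  by have := congr1 (fun f : vtx n k => f j) Exx'; rewrite /= !ffunE (negbTE ji).
by apply/ffunP => j; rewrite !ffunE; case: eqP => // /eqP ji; rewrite Exx'.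
Qed.

Lemma line_base_in x : line_base x \in base_plane.
Proof. by rewrite inE ffunE eqxx. Qed.

Lemma sum_card_line_trace T : (\sum_(y in base_plane) #|line_trace T y|)%N = #|T|.
Proof.
rewrite -[RHS]sum1_card [RHS](partition_big line_base (mem base_plane)) /=;
  last by move=> x _; exact: line_base_in.
by apply: eq_bigr => y _; rewrite -sum1_card; apply: eq_bigl => x; rewrite !inE.
Qed.

Lemma card_line y : y \in base_plane -> #|line_trace [set: vtx n k] y| = k.
Proof.
rewrite inE => /eqP yi.
pose pt (c : 'I_k) : vtx n k := [ffun j => if j == i then c else y j].
have pt_inj : injective pt.
  by move=> c c' /(congr1 (fun g : vtx n k => g i)); rewrite !ffunE eqxx.
suff -> : line_trace [set: vtx n k] y = [set pt c | c in 'I_k].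
  by rewrite card_imset // card_ord.
apply/setP => x; rewrite !inE; apply/idP/imsetP => [/eqP xy | [c _ ->]].
  exists (x i) => //; apply/ffunP => j; rewrite ffunE.
  by case: eqP => [-> //|/eqP ji]; rewrite -xy ffunE (negbTE ji).
by apply/eqP/ffunP => j; rewrite !ffunE; case: eqP => [->|]; rewrite ?yi.
Qed.

Lemma card_line_trace_le T y : y \in base_plane -> #|line_trace T y| <= k.
Proof.
move=> yP; rewrite -[X in _ <= X](card_line yP) subset_leq_card //.
by apply/subsetP => x; rewrite !inE => /andP[_ ->].
Qed.

Lemma card_base_plane : #|base_plane| * k = k ^ n.
Proof.
rewrite -sum_nat_const -(eq_bigr _ card_line) sum_card_line_trace.
by rewrite cardsT card_ffun !card_ord.
Qed.

Lemma on_lineP (S : {set vtx n k}) :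
  reflect {in S &, forall x x', line_base x = line_base x'} (on_line i S).
Proof.
apply: (iffP forall_inP) => [onS x x' xS x'S | Sbase x xS].
  apply/eqP/eq_line_baseP => j ji.
  by have /forall_inP /(_ x' x'S) /forallP /(_ j) := onS x xS; rewrite ji => /eqP.
apply/forall_inP => x' x'S; apply/forallP => j; apply/implyP => ji.
by apply/eqP; move/eqP/eq_line_baseP: (Sbase x x' xS x'S); apply.
Qed.

Lemma card_dir_edges r T : (0 < r)%N ->
  #|dir_edges r T| = (\sum_(y in base_plane) 'C(#|line_trace T y|, r))%N.
Proof.
move=> r_gt0.
pose base_of (S : {set vtx n k}) :=
  if [pick x in S] is Some x then line_base x else [ffun _ => z].
have base_ofP S : base_of S \in base_plane.
  by rewrite /base_of; case: pickP => [x _|_]; rewrite ?line_base_in // inE ffunE.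
have base_ofE (S : {set vtx n k}) x : x \in S -> on_line i S -> base_of S = line_base x.
  move=> xS /on_lineP Sbase; rewrite /base_of.
  by case: pickP => [x' x'S|/(_ x)]; [exact: Sbase | rewrite xS].
rewrite -sum1_card (partition_big base_of (mem base_plane)) /=;
  last by move=> S _; exact: base_ofP.
apply: eq_bigr => y _; rewrite -cards_draws -sum1_card; apply: eq_bigl => S.
rewrite !inE; apply/idP/idP.
  case/andP=> /and3P[/eqP -> ST onS] /eqP <-; rewrite eqxx andbT.
  by apply/subsetP => x xS; rewrite !inE (subsetP ST _ xS) (base_ofE _ _ xS onS) eqxx.
case/andP=> Sy /eqP Sr.
have Sbase x : x \in S -> (x \in T) && (line_base x == y).
  by move/(subsetP Sy); rewrite inE.
have onS : on_line i S.
  by apply/on_lineP => x x' /Sbase/andP[_ /eqP->] /Sbase/andP[_ /eqP->].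
have [x xS] : exists x, x \in S by apply/set0Pn; rewrite -card_gt0 Sr.
rewrite Sr eqxx onS andbT (base_ofE _ _ xS onS); have /andP[_ ->] := Sbase x xS.
by rewrite andbT; apply/subsetP => x' /Sbase/andP[].
Qed.

End AxisLines.

Lemma eF_sum_dir n k r (T : {set vtx n k}) :
  eF r T = (\sum_(i : 'I_n) #|dir_edges i r T|)%N.
Proof.
rewrite /eF -sum1_card.
under [RHS]eq_bigr do rewrite -sum1_card.
by rewrite pair_big_dep /=; apply: eq_bigl => -[j S]; rewrite !inE.
Qed.

Lemma expnB_le_ffact t r : (t - r) ^ r <= t ^_ r.
Proof.
rewrite ffact_prod -[X in _ ^ X](card_ord r) -prod_nat_const.
by apply: leq_prod => j _; apply: leq_sub2l; exact: ltnW.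
Qed.

Lemma ffact_le_expn k r : k ^_ r <= k ^ r.
Proof.
rewrite ffact_prod -[X in _ ^ X](card_ord r) -prod_nat_const.
by apply: leq_prod => j _; exact: leq_subr.
Qed.

Lemma bin_mul_expnB_le k t r : 'C(k, r) * (t - r) ^ r <= 'C(t, r) * k ^ r.
Proof.
rewrite -(@leq_pmul2r r`!) ?fact_gt0 // mulnAC bin_ffact.
rewrite [X in _ <= X]mulnAC bin_ffact mulnC.
exact: leq_mul (expnB_le_ffact t r) (ffact_le_expn k r).
Qed.

Local Open Scope ring_scope.

Lemma exprn_tangent_le (R : realDomainType) (x a : R) r : 0 <= x -> 0 <= a ->
  a ^+ r + r%:R * a ^+ r.-1 * (x - a) <= x ^+ r.
Proof.
move=> x_ge0 a_ge0; case: r => [|r]; first by rewrite !mul0r addr0.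
elim: r => [|r IH] /=; first by rewrite !expr1 expr0 mulr1 mul1r addrC subrK.
apply: le_trans (ler_wpM2l x_ge0 IH); rewrite -subr_ge0.
have -> : x * (a ^+ r.+1 + r.+1%:R * a ^+ r.+1.-1 * (x - a))
          - (a ^+ r.+2 + r.+2%:R * a ^+ r.+1 * (x - a))
        = r.+1%:R * a ^+ r * (x - a) ^+ 2.
  by rewrite -[r.+2%:R]natr1 !exprS /=; ring.
by rewrite mulr_ge0 ?sqr_ge0 // mulr_ge0 // exprn_ge0.
Qed.

Lemma bin_tangent_le (R : realFieldType) (k t r : nat) (a : R) :
  (0 < k)%N -> (0 < r)%N -> (t <= k)%N -> 0 < a ->
  'C(k, r)%:R * (a ^+ r + r%:R * a ^+ r.-1 * ((t%:R - r%:R) / k%:R - a))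
    <= 'C(t, r)%:R.
Proof.
move=> k_gt0 r_gt0 tk a_gt0; have k_gt0R : 0 < k%:R :> R by rewrite ltr0n.
set x := (_ - _) / _.
have [rt | tr] := leqP r t.
  have x_ge0 : 0 <= x by rewrite /x divr_ge0 ?ler0n // subr_ge0 ler_nat.
  apply: le_trans (ler_wpM2l (ler0n _ _) (exprn_tangent_le r x_ge0 (ltW a_gt0))) _.
  rewrite expr_div_n mulrA ler_pdivrMr ?exprn_gt0 // -natrB //.
  by rewrite -!natrX -!natrM ler_nat bin_mul_expnB_le.
rewrite [in leRHS]bin_small // mulr_ge0_le0 ?ler0n //.
have x_lt0 : x < 0 by rewrite pmulr_llt0 ?invr_gt0 // subr_lt0 ltr_nat.
have -> : a ^+ r + r%:R * a ^+ r.-1 * (x - a) = a ^+ r.-1 * (a + r%:R * (x - a)).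
  by rewrite -{1}(prednK r_gt0) exprS; ring.
rewrite mulr_ge0_le0 ?exprn_ge0 ?(ltW a_gt0) //.
have : r%:R * x < 0 by rewrite pmulr_rlt0 ?ltr0n.
have : a <= r%:R * a by rewrite ler_peMl ?ler1n // ltW.
by rewrite mulrBr; lra.
Qed.

Lemma dir_edges_lower_bound (R : realFieldType) n k r (i : 'I_n) (gamma : R)
    (T : {set vtx n k}) :
  (0 < k)%N -> (0 < r)%N -> r%:R / k%:R < gamma ->
  gamma * (k ^ n)%:R <= #|T|%:R ->
  (gamma - r%:R / k%:R) ^+ r * #|dir_edges i r [set: vtx n k]|%:R
    <= #|dir_edges i r T|%:R.
Proof.
move=> k_gt0 r_gt0 gamma_gt HT; have k_gt0R : 0 < k%:R :> R by rewrite ltr0n.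
set a := gamma - _; have a_gt0 : 0 < a by rewrite subr_gt0.
pose z := Ordinal k_gt0.
pose t y := #|line_trace i z T y|.
have line_excess y : ((t y)%:R - r%:R) / k%:R - a = (t y)%:R / k%:R - gamma.
  by rewrite /a; field; rewrite lt0r_neq0.
have excess_ge0 : 0 <= \sum_(y in base_plane i z) ((t y)%:R / k%:R - gamma).
  rewrite sumrB -mulr_suml -natr_sum sum_card_line_trace sumr_const.
  by rewrite subr_ge0 ler_pdivlMr // -[gamma *+ _]mulr_natr -mulrA -natrM card_base_plane.
rewrite !(card_dir_edges i z) // !natr_sum mulr_sumr.
rewrite (eq_bigr (fun=> 'C(k, r)%:R * a ^+ r)); last first.
  by move=> y yP; rewrite (card_line yP) mulrC.
pose c := 'C(k, r)%:R * r%:R * a ^+ r.-1.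
apply: (@le_trans _ _ (\sum_(y in base_plane i z)
    ('C(k, r)%:R * a ^+ r + c * ((t y)%:R / k%:R - gamma)))).
  rewrite big_split /= lerDl -mulr_sumr mulr_ge0 //.
  by rewrite !mulr_ge0 ?ler0n ?exprn_ge0 ?ltW.
apply: ler_sum => y yP.
rewrite -line_excess /c -[_ * _ * a ^+ _]mulrA -mulrA -mulrDr.
exact: bin_tangent_le (card_line_trace_le T yP) a_gt0.
Qed.

Theorem lemma7p1 (R : realFieldType) (n k r : nat) (gamma : R)
  (T : {set vtx n k}) :
  (0 < n)%N -> (0 < k)%N -> (0 < r)%N -> (r <= k)%N ->
  10 * r%:R / k%:R < gamma ->
  gamma * (k ^ n)%:R < (#|T|)%:R ->
  (gamma - r%:R / k%:R) ^+ r * (eF r [set: vtx n k])%:R <= (eF r T)%:R.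
Proof.
move=> _ k_gt0 r_gt0 _ gamma_gt HT.
have gamma_gt' : r%:R / k%:R < gamma.
  have : 0 <= r%:R / k%:R :> R by rewrite divr_ge0 ?ler0n.
  by move: gamma_gt; rewrite -mulrA; lra.
rewrite !eF_sum_dir !natr_sum mulr_sumr; apply: ler_sum => i _.
exact: dir_edges_lower_bound k_gt0 r_gt0 gamma_gt' (ltW HT).
Qed.
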